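(* Let $d>0$, $a\ge0$, $r>0$ and $0<x_1<L$. Then $$\lim_{\xi\to+\infty}\lambda_1\big(d,a,r-\xi\chi_{(x_1,L]},(0,L)\big)=\lambda_1^D\big(d,a,r,(0,x_1)\big).$$
   Context: $\chi_{(x_1,L]}(x)=1$ for $x_1<x\le L$ and $0$ for $0\le x\le x_1$. For $0\le y_1<y_2\le L$ and bounded $s$, $\lambda_1(d,a,s,(y_1,y_2))$ denotes the principal eigenvalue (the eigenvalue with a positive eigenfunction) of $d\varphi''-a\varphi'+s(x)\varphi=\lambda\varphi$ on $(y_1,y_2)$, $d\varphi'(y_1)-a\varphi(y_1)=\varphi'(y_2)=0$. $\lambda_1^D(d,a,r,(y_1,y_2))$ denotes the principal eigenvalue of $d\varphi''-a\varphi'+r\varphi=\lambda\varphi$ on $(y_1,y_2)$ with $d\varphi'(y_1)-a\varphi(y_1)=0$ and $\varphi(y_2)=0$. *)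

From Stdlib Require Import Reals Lra ClassicalEpsilon.
From Coquelicot Require Import Coquelicot.
Open Scope R_scope.

Definition chi (x1 L : R) (x : R) : R :=
  if Rlt_le_dec x1 x then (if Rle_dec x L then 1 else 0) else 0.

(* phi is a (strong, W^{2,infty}-type) solution on [y1,y2] of
     d phi'' - a phi' + s phi = lam phi,
   with phi' its derivative on [y1,y2]; the second-order equation is
   stated in integrated form:  d (phi'(x) - phi'(y1)) = int_{y1}^x (a phi' - s phi + lam phi). *)
Definition solves_eig (d a : R) (s : R -> R) (y1 y2 lam : R)
  (phi dphi : R -> R) : Prop :=
  (forall x, y1 <= x <= y2 -> is_derive phi x (dphi x)) /\
  (forall x, y1 <= x <= y2 ->
     is_RInt (fun t => a * dphi t - s t * phi t + lam * phi t) y1 x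
             (d * (dphi x - dphi y1))).

Definition is_principal_eig (d a : R) (s : R -> R) (y1 y2 lam : R) : Prop :=
  exists phi dphi : R -> R,
    solves_eig d a s y1 y2 lam phi dphi /\
    (forall x, y1 < x < y2 -> 0 < phi x) /\
    d * dphi y1 - a * phi y1 = 0 /\ dphi y2 = 0.

Definition is_principal_eig_D (d a r : R) (y1 y2 lam : R) : Prop :=
  exists phi dphi : R -> R,
    solves_eig d a (fun _ => r) y1 y2 lam phi dphi /\
    (forall x, y1 < x < y2 -> 0 < phi x) /\
    d * dphi y1 - a * phi y1 = 0 /\ phi y2 = 0.

Definition lambda1 (d a : R) (s : R -> R) (y1 y2 : R) : R :=
  epsilon (inhabits 0) (fun lam => is_principal_eig d a s y1 y2 lam).

Definition lambda1D (d a r : R) (y1 y2 : R) : R :=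
  epsilon (inhabits 0) (fun lam => is_principal_eig_D d a r y1 y2 lam).

From Stdlib Require Import Reals Lra ClassicalEpsilon.
From Coquelicot Require Import Coquelicot.
Open Scope R_scope.

(** With [k = a / (2 d)], the substitution [phi = exp (k t) psi] turns the eigenvalue
    equation for the potential [r - xi chi] into [psi'' = - w^2 psi] on [(0, x1)] and
    [psi'' = m^2 psi] on [(x1, L)], where [lam = r - a^2 / (4 d) - d w^2] and
    [d m^2 = xi - d w^2].  The boundary conditions select
    [psi = w cos (w t) + k sin (w t)] on the left and
    [psi = m cosh (m (L - t)) + k sinh (m (L - t))] on the right, and the two pieces glue
    into a positive eigenfunction when their Wronskian vanishes at [x1] for a [w] below
    the first frequency [wD] at which the left profile vanishes at [x1]; that [wD] gives
    [lambda1D].  As [xi -> +oo], [m -> +oo], so the right profile has logarithmic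
    derivative below [- m / 2] at [x1] and the intermediate value theorem yields a root in
    every [[wD - delta, wD)].  Principal eigenvalues being unique, [lambda1] and [lambda1D]
    are these explicit values, and [lambda1 -> lambda1D]. *)

Lemma continuous_Rplus (f g : R -> R) x :
  continuous f x -> continuous g x -> continuous (fun y => f y + g y) x.
Proof. exact (continuous_plus f g x). Qed.

Lemma continuous_Rmult (f g : R -> R) x :
  continuous f x -> continuous g x -> continuous (fun y => f y * g y) x.
Proof. exact (continuous_mult f g x). Qed.

Lemma continuous_Rminus (f g : R -> R) x :
  continuous f x -> continuous g x -> continuous (fun y => f y - g y) x.
Proof.
  intros Hf Hg. apply continuous_Rplus; [exact Hf|exact (continuous_opp g x Hg)].
Qed.

Lemma is_derive_continuous (f : R -> R) x l : is_derive f x l -> continuous f x.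
Proof. intros H. apply (ex_derive_continuous (V := R_NormedModule)). now exists l. Qed.

Lemma ex_derive_continuity_pt (f : R -> R) x : ex_derive f x -> continuity_pt f x.
Proof.
  intros H. apply continuity_pt_filterlim. exact (ex_derive_continuous (V := R_NormedModule) f x H).
Qed.

(** [auto_derive] leaves derivatives of opaque functions in eta-expanded form. *)
Lemma Derive_eta_unique (f : R -> R) x l : is_derive f x l -> Derive (fun y => f y) x = l.
Proof. exact (is_derive_unique f x l). Qed.

Lemma locally_open_interval (P : R -> Prop) y1 y2 t :
  y1 < t < y2 -> (forall z, y1 < z < y2 -> P z) -> locally t P.
Proof.
  intros Ht HP. assert (He : 0 < Rmin (t - y1) (y2 - t)) by (apply Rmin_glb_lt; lra).
  exists (mkposreal _ He). intros z Hz. apply HP.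
  change (Rabs (z - t) < Rmin (t - y1) (y2 - t)) in Hz. apply Rabs_def2 in Hz.
  pose proof (Rmin_l (t - y1) (y2 - t)). pose proof (Rmin_r (t - y1) (y2 - t)). lra.
Qed.

(** Functions known only on [[y1, y2]] are extended to [R] through the projection
    [clamp y1 y2], which makes one-sided continuity at the ends two-sided. *)
Definition clamp (y1 y2 x : R) : R := Rmax y1 (Rmin x y2).

Lemma clamp_in y1 y2 x : y1 <= y2 -> y1 <= clamp y1 y2 x <= y2.
Proof. unfold clamp, Rmax, Rmin; intros; repeat destruct Rle_dec; lra. Qed.

Lemma clamp_id y1 y2 x : y1 <= x <= y2 -> clamp y1 y2 x = x.
Proof. unfold clamp, Rmax, Rmin; intros; repeat destruct Rle_dec; lra. Qed.

Lemma continuous_clamp y1 y2 x : y1 <= y2 -> continuous (clamp y1 y2) x.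
Proof.
  intros Hy. apply filterlim_locally. intros eps. exists eps. intros y Hy'.
  change (Rabs (y - x) < eps) in Hy'. change (Rabs (clamp y1 y2 y - clamp y1 y2 x) < eps).
  eapply Rle_lt_trans; [|exact Hy'].
  unfold clamp, Rmax, Rmin; repeat destruct Rle_dec; unfold Rabs; repeat destruct Rcase_abs; lra.
Qed.

Lemma continuous_comp_clamp (f : R -> R) y1 y2 x : y1 <= y2 ->
  (forall z, y1 <= z <= y2 -> continuous f z) -> continuous (fun x => f (clamp y1 y2 x)) x.
Proof.
  intros Hy Hf. apply (continuous_comp (clamp y1 y2) f).
  - now apply continuous_clamp.
  - now apply Hf, clamp_in.
Qed.

Lemma is_RInt_0 a b : is_RInt (fun _ => 0) a b 0.
Proof.
  pose proof (is_RInt_const (V := R_NormedModule) a b 0) as H.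
  now rewrite (scal_zero_r (V := R_NormedModule)) in H.
Qed.

Lemma continuous_comp_clamp_RInt (g F : R -> R) y1 y2 x : y1 < y2 ->
  (forall z, y1 <= z <= y2 -> is_RInt g y1 z (F z)) ->
  continuous (fun x => F (clamp y1 y2 x)) x.
Proof.
  intros Hy HI.
  set (g0 := fun t => if Rle_dec y1 t then if Rle_dec t y2 then g t else 0 else 0).
  assert (Hg0 : forall z, y1 <= z <= y2 -> is_RInt g0 y1 z (F z)).
  { intros z Hz. apply is_RInt_ext with g; [|now apply HI].
    intros t Ht. rewrite Rmin_left in Ht by lra. rewrite Rmax_right in Ht by lra.
    unfold g0. repeat destruct Rle_dec; lra. }
  assert (HF0 : F y1 = 0).
  { rewrite <- (is_RInt_unique _ _ _ _ (HI y1 ltac:(lra))). rewrite RInt_point. reflexivity. }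
  apply (continuous_RInt_1 g0 y1 x). exists (mkposreal 1 Rlt_0_1). intros z _.
  destruct (Rle_dec z y1) as [Hz|Hz]; [|destruct (Rle_dec z y2) as [Hz2|Hz2]].
  - assert (clamp y1 y2 z = y1) as -> by (unfold clamp, Rmax, Rmin; repeat destruct Rle_dec; lra).
    rewrite HF0. apply is_RInt_ext with (fun _ => 0); [|apply is_RInt_0].
    intros t Ht. rewrite Rmax_left in Ht by lra. unfold g0. destruct Rle_dec; lra.
  - rewrite clamp_id by lra. apply Hg0. lra.
  - assert (clamp y1 y2 z = y2) as -> by (unfold clamp, Rmax, Rmin; repeat destruct Rle_dec; lra).
    rewrite <- (Rplus_0_r (F y2)). apply (is_RInt_Chasles g0 y1 y2 z).
    + apply Hg0. lra.
    + apply is_RInt_ext with (fun _ => 0); [|apply is_RInt_0].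
      intros t Ht. rewrite Rmin_left in Ht by lra. unfold g0. repeat destruct Rle_dec; lra.
Qed.

Section Regularity.

Variables (d a lam y1 y2 : R) (s phi dphi : R -> R).
Hypotheses (Hd : 0 < d) (Hy : y1 < y2) (Hsol : solves_eig d a s y1 y2 lam phi dphi).

Lemma solves_eig_continuous_phi z : y1 <= z <= y2 -> continuous phi z.
Proof. intros Hz. apply is_derive_continuous with (dphi z). now apply Hsol. Qed.

Lemma solves_eig_continuous_dphi x : continuous (fun x => dphi (clamp y1 y2 x)) x.
Proof.
  apply continuous_ext with (fun x => dphi y1 + / d * (d * (dphi (clamp y1 y2 x) - dphi y1))).
  { intros y. simpl. field. lra. }
  apply continuous_Rplus; [apply continuous_const|].
  apply continuous_Rmult; [apply continuous_const|].
  apply (continuous_comp_clamp_RInt (fun t => a * dphi t - s t * phi t + lam * phi t)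
           (fun z => d * (dphi z - dphi y1))); [exact Hy|apply Hsol].
Qed.

Lemma solves_eig_derive_dphi t : y1 < t < y2 -> continuous s t ->
  is_derive dphi t ((a * dphi t - s t * phi t + lam * phi t) / d).
Proof.
  intros Ht Hs.
  set (g := fun t => a * dphi t - s t * phi t + lam * phi t).
  assert (Hdt : continuous dphi t).
  { apply continuous_ext_loc with (fun x => dphi (clamp y1 y2 x)).
    - apply locally_open_interval with y1 y2; [exact Ht|].
      intros z Hz. rewrite clamp_id; lra.
    - apply solves_eig_continuous_dphi. }
  assert (Hg : continuous g t).
  { pose proof (solves_eig_continuous_phi t ltac:(lra)).
    unfold g. repeat first [apply continuous_Rminus | apply continuous_Rplus
      | apply continuous_Rmult | apply continuous_const | assumption]. }
  assert (HF : is_derive (fun z => d * (dphi z - dphi y1)) t (g t)).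
  { apply (is_derive_RInt g _ y1); [|exact Hg].
    apply locally_open_interval with y1 y2; [exact Ht|]. intros z Hz. apply Hsol. lra. }
  replace ((a * dphi t - s t * phi t + lam * phi t) / d) with (plus (/ d * g t) zero)
    by (unfold g, plus, zero; simpl; field; lra).
  eapply is_derive_ext;
    [|exact (is_derive_plus _ _ t _ _ (is_derive_scal _ t (/ d) _ HF) (is_derive_const (dphi y1) t))].
  intros z. unfold plus, zero; simpl. field. lra.
Qed.

End Regularity.

Lemma eq_of_derive_0_except (H : R -> R) y1 c y2 :
  y1 <= c <= y2 -> (forall x, y1 <= x <= y2 -> continuity_pt H x) ->
  (forall t, y1 < t < y2 -> t <> c -> is_derive H t 0) -> H y2 = H y1.
Proof.
  intros Hc Hcont Hder.
  assert (Hseg : forall p q, y1 <= p <= q -> q <= y2 -> (forall t, p < t < q -> t <> c) ->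
                   H q = H p).
  { intros p q Hp Hq Hpq.
    destruct (MVT_gen H p q (fun _ => 0)) as [xi [_ Hxi]].
    - intros x Hx. rewrite Rmin_left, Rmax_right in Hx by lra. apply Hder; [lra|now apply Hpq].
    - intros x Hx. rewrite Rmin_left, Rmax_right in Hx by lra. apply Hcont. lra.
    - lra. }
  rewrite (Hseg c y2), (Hseg y1 c); try intros; lra.
Qed.

Lemma antiderivative_increasing (f : R -> R) y1 y2 : y1 < y2 ->
  (forall x, continuous f x) -> (forall x, y1 < x < y2 -> 0 < f x) ->
  exists K, (forall x, is_derive K x (f x)) /\ K y1 < K y2.
Proof.
  intros Hy Hc Hpos. exists (fun x => RInt f y1 x). split.
  - intros x. apply (is_derive_RInt f _ y1 x); [|apply Hc].
    exists (mkposreal 1 Rlt_0_1). intros b _.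
    apply (RInt_correct (V := R_CompleteNormedModule)). now apply ex_RInt_continuous.
  - rewrite RInt_point. now apply RInt_gt_0.
Qed.

Definition weighted_wronskian (d a : R) (phi dphi psi dpsi : R -> R) (x : R) : R :=
  exp (- (a / d) * x) * (d * (dphi x * psi x - phi x * dpsi x)).

Section WeightedWronskian.

Variables (d a lam mu y1 y2 : R) (s phi dphi psi dpsi : R -> R).
Hypotheses (Hd : 0 < d) (Hy : y1 < y2)
  (Hphi : solves_eig d a s y1 y2 lam phi dphi) (Hpsi : solves_eig d a s y1 y2 mu psi dpsi).

Lemma continuous_weighted_wronskian_clamp x :
  continuous (fun x => weighted_wronskian d a phi dphi psi dpsi (clamp y1 y2 x)) x.
Proof.
  assert (Hcl : forall f, (forall z, y1 <= z <= y2 -> continuous f z) ->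
                  continuous (fun x => f (clamp y1 y2 x)) x)
    by (intros f; apply continuous_comp_clamp; lra).
  pose proof (solves_eig_continuous_phi d a lam y1 y2 s phi dphi Hphi).
  pose proof (solves_eig_continuous_phi d a mu y1 y2 s psi dpsi Hpsi).
  pose proof (solves_eig_continuous_dphi d a lam y1 y2 s phi dphi Hd Hy Hphi x).
  pose proof (solves_eig_continuous_dphi d a mu y1 y2 s psi dpsi Hd Hy Hpsi x).
  unfold weighted_wronskian. apply continuous_Rmult.
  - apply (Hcl (fun z => exp (- (a / d) * z))). intros z _.
    apply continuous_exp_comp, continuous_Rmult; [apply continuous_const|apply continuous_id].
  - apply continuous_Rmult; [apply continuous_const|].
    apply continuous_Rminus; apply continuous_Rmult; auto.
Qed.

(** With the weight [exp (- (a / d) x)] the operator is in divergence form. *)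
Lemma is_derive_weighted_wronskian t : y1 < t < y2 -> continuous s t ->
  is_derive (weighted_wronskian d a phi dphi psi dpsi) t
    ((lam - mu) * (exp (- (a / d) * t) * (phi t * psi t))).
Proof.
  intros Ht Hs.
  pose proof (proj1 Hphi t ltac:(lra)) as Dphi. pose proof (proj1 Hpsi t ltac:(lra)) as Dpsi.
  pose proof (solves_eig_derive_dphi d a lam y1 y2 s phi dphi Hd Hy Hphi t Ht Hs) as DDphi.
  pose proof (solves_eig_derive_dphi d a mu y1 y2 s psi dpsi Hd Hy Hpsi t Ht Hs) as DDpsi.
  unfold weighted_wronskian. auto_derive; [repeat split; eexists; eauto|].
  rewrite (Derive_eta_unique _ _ _ Dphi), (Derive_eta_unique _ _ _ Dpsi),
    (Derive_eta_unique _ _ _ DDphi), (Derive_eta_unique _ _ _ DDpsi).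
  field. lra.
Qed.

End WeightedWronskian.

(** The weighted Wronskian vanishes at [y1] by the Robin condition and at [y2] by
    hypothesis, while its total variation is [(lam - mu)] times the integral of a positive
    function. *)
Lemma principal_eig_unique d a (s : R -> R) y1 y2 c lam mu phi dphi psi dpsi :
  0 < d -> y1 < y2 -> y1 <= c <= y2 ->
  (forall t, y1 < t < y2 -> t <> c -> continuous s t) ->
  solves_eig d a s y1 y2 lam phi dphi -> solves_eig d a s y1 y2 mu psi dpsi ->
  (forall x, y1 < x < y2 -> 0 < phi x) -> (forall x, y1 < x < y2 -> 0 < psi x) ->
  d * dphi y1 - a * phi y1 = 0 -> d * dpsi y1 - a * psi y1 = 0 ->
  dphi y2 * psi y2 - phi y2 * dpsi y2 = 0 -> lam = mu.
Proof.
  intros Hd Hy Hc Hs Hphi Hpsi Pphi Ppsi Bphi Bpsi B2.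
  set (cl := clamp y1 y2).
  set (W := weighted_wronskian d a phi dphi psi dpsi).
  destruct (antiderivative_increasing
              (fun x => exp (- (a / d) * cl x) * (phi (cl x) * psi (cl x))) y1 y2)
    as [K [HK HKinc]].
  { exact Hy. }
  { intros x.
    apply (continuous_comp_clamp (fun x => exp (- (a / d) * x) * (phi x * psi x))); [lra|intros z Hz].
    apply continuous_Rmult.
    - apply continuous_exp_comp, continuous_Rmult; [apply continuous_const|apply continuous_id].
    - apply continuous_Rmult; eapply solves_eig_continuous_phi; eauto. }
  { intros x Hx. unfold cl. rewrite clamp_id by lra.
    apply Rmult_lt_0_compat; [apply exp_pos|apply Rmult_lt_0_compat; auto]. }
  assert (HH : W (cl y2) - (lam - mu) * K y2 = W (cl y1) - (lam - mu) * K y1).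
  { apply (eq_of_derive_0_except (fun x => W (cl x) - (lam - mu) * K x) y1 c y2); [exact Hc| |].
    - intros x _. apply continuity_pt_filterlim.
      change (continuous (fun x => W (cl x) - (lam - mu) * K x) x).
      apply continuous_Rminus; [now apply (continuous_weighted_wronskian_clamp d a lam mu y1 y2 s)|].
      apply continuous_Rmult; [apply continuous_const|]. now eapply is_derive_continuous.
    - intros t Ht Htc.
      apply is_derive_ext_loc with (fun x => W x - (lam - mu) * K x).
      { apply locally_open_interval with y1 y2; [exact Ht|].
        intros z Hz. unfold cl. rewrite clamp_id; lra. }
      pose proof (is_derive_weighted_wronskian d a lam mu y1 y2 s phi dphi psi dpsi
                    Hd Hy Hphi Hpsi t Ht (Hs t Ht Htc)) as DW. fold W in DW.
      auto_derive; [repeat split; eexists; eauto|].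
      rewrite (Derive_eta_unique _ _ _ DW), (Derive_eta_unique _ _ _ (HK t)).
      unfold cl. rewrite clamp_id by lra. ring. }
  unfold cl, W, weighted_wronskian in HH. rewrite !clamp_id in HH by lra.
  replace (d * (dphi y1 * psi y1 - phi y1 * dpsi y1)) with
    ((d * dphi y1 - a * phi y1) * psi y1 - phi y1 * (d * dpsi y1 - a * psi y1)) in HH by ring.
  rewrite Bphi, Bpsi, B2 in HH.
  assert (E : (lam - mu) * (K y2 - K y1) = 0) by lra.
  apply Rmult_integral in E. destruct E; lra.
Qed.

Lemma lambda1_eq d a (s : R -> R) y1 y2 c lam :
  0 < d -> y1 < y2 -> y1 <= c <= y2 ->
  (forall t, y1 < t < y2 -> t <> c -> continuous s t) ->
  is_principal_eig d a s y1 y2 lam -> lambda1 d a s y1 y2 = lam.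
Proof.
  intros Hd Hy Hc Hs Hlam. unfold lambda1.
  destruct (epsilon_spec (inhabits 0) _ (ex_intro _ _ Hlam)) as [p [dp [Sp [Pp [Bp Np]]]]].
  destruct Hlam as [q [dq [Sq [Pq [Bq Nq]]]]].
  apply (principal_eig_unique d a s y1 y2 c _ _ p dp q dq); auto.
  rewrite Np, Nq. ring.
Qed.

Lemma lambda1D_eq d a r y1 y2 lam :
  0 < d -> y1 < y2 -> is_principal_eig_D d a r y1 y2 lam -> lambda1D d a r y1 y2 = lam.
Proof.
  intros Hd Hy Hlam. unfold lambda1D.
  destruct (epsilon_spec (inhabits 0) _ (ex_intro _ _ Hlam)) as [p [dp [Sp [Pp [Bp Dp]]]]].
  destruct Hlam as [q [dq [Sq [Pq [Bq Dq]]]]].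
  apply (principal_eig_unique d a (fun _ => r) y1 y2 y1 _ _ p dp q dq); auto; try lra.
  - intros. apply continuous_const.
  - rewrite Dp, Dq. ring.
Qed.

Definition glue (c : R) (g h : R -> R) (t : R) : R := if Rle_dec t c then g t else h t.

Lemma glue_le c g h t : t <= c -> glue c g h t = g t.
Proof. unfold glue; destruct Rle_dec; lra. Qed.

Lemma glue_gt c g h t : c < t -> glue c g h t = h t.
Proof. unfold glue; destruct Rle_dec; lra. Qed.

Lemma is_derive_glue c (g h dg dh : R -> R) x :
  (x <= c -> is_derive g x (dg x)) -> (c <= x -> is_derive h x (dh x)) ->
  g c = h c -> dg c = dh c -> is_derive (glue c g h) x (glue c dg dh x).
Proof.
  intros Hg Hh E0 E1.
  destruct (Rtotal_order x c) as [Hx|[<-|Hx]].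
  - rewrite glue_le by lra. apply is_derive_ext_loc with g; [|apply Hg; lra].
    apply locally_open_interval with (x - 1) c; [lra|]. intros z Hz. now rewrite glue_le by lra.
  - rewrite glue_le by lra.
    apply is_derive_Reals. intros eps Heps.
    destruct (proj1 (is_derive_Reals _ _ _) (Hg (Rle_refl x)) eps Heps) as [d1 Hd1].
    destruct (proj1 (is_derive_Reals _ _ _) (Hh (Rle_refl x)) eps Heps) as [d2 Hd2].
    assert (Hd : 0 < Rmin d1 d2) by (apply Rmin_glb_lt; apply cond_pos).
    exists (mkposreal _ Hd). intros u Hu0 Hu. simpl in Hu.
    pose proof (Rmin_l d1 d2). pose proof (Rmin_r d1 d2).
    rewrite (glue_le x g h x) by lra.
    destruct (Rle_dec (x + u) x).
    + rewrite glue_le by lra. apply Hd1; [exact Hu0|lra].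
    + rewrite glue_gt, E0, E1 by lra. apply Hd2; [exact Hu0|lra].
  - rewrite glue_gt by lra. apply is_derive_ext_loc with h; [|apply Hh; lra].
    apply locally_open_interval with c (x + 1); [lra|]. intros z Hz. now rewrite glue_gt by lra.
Qed.

Lemma solves_eig_glue d a s y1 c y2 lam (g dg h dh : R -> R) :
  y1 <= c <= y2 -> g c = h c -> dg c = dh c ->
  solves_eig d a s y1 c lam g dg -> solves_eig d a s c y2 lam h dh ->
  solves_eig d a s y1 y2 lam (glue c g h) (glue c dg dh).
Proof.
  intros Hc E0 E1 [Dg Ig] [Dh Ih]. split.
  - intros x Hx. apply is_derive_glue; [intros; apply Dg| intros; apply Dh|..]; auto; lra.
  - intros x Hx. rewrite (glue_le c dg dh y1) by lra.
    destruct (Rle_dec x c) as [Hxc|Hxc].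
    + rewrite glue_le by lra. apply is_RInt_ext with (fun t => a * dg t - s t * g t + lam * g t).
      * intros t Ht. rewrite Rmin_left, Rmax_right in Ht by lra. now rewrite !glue_le by lra.
      * apply Ig. lra.
    + rewrite glue_gt by lra.
      replace (d * (dh x - dg y1)) with (d * (dg c - dg y1) + d * (dh x - dh c)) by (rewrite E1; ring).
      apply (is_RInt_Chasles (V := R_NormedModule) _ y1 c x).
      * apply is_RInt_ext with (fun t => a * dg t - s t * g t + lam * g t).
        -- intros t Ht. rewrite Rmin_left, Rmax_right in Ht by lra. now rewrite !glue_le by lra.
        -- apply Ig. lra.
      * apply is_RInt_ext with (fun t => a * dh t - s t * h t + lam * h t).
        -- intros t Ht. rewrite Rmin_left, Rmax_right in Ht by lra. now rewrite !glue_gt by lra.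
        -- apply Ih. lra.
Qed.

(** With [k = a / (2 d)] the substitution [phi = exp (k t) p] removes the first-order term. *)
Definition twist (k : R) (p : R -> R) (t : R) : R := exp (k * t) * p t.

Lemma solves_eig_twist d a s y1 y2 lam q (p dp : R -> R) :
  0 < d ->
  (forall x, is_derive p x (dp x)) -> (forall x, is_derive dp x (q * p x)) ->
  (forall t, y1 < t < y2 -> s t = lam + a * a / (4 * d) - d * q) ->
  solves_eig d a s y1 y2 lam (twist (a / (2 * d)) p)
    (twist (a / (2 * d)) (fun t => a / (2 * d) * p t + dp t)).
Proof.
  intros Hd Dp Ddp Hs. set (k := a / (2 * d)).
  set (dphi := twist k (fun t => k * p t + dp t)).
  set (ddphi := twist k (fun t => k * k * p t + 2 * k * dp t + q * p t)).
  split.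
  - intros x _. unfold twist. auto_derive; [now exists (dp x)|].
    rewrite (Derive_eta_unique _ _ _ (Dp x)). unfold dphi, twist. ring.
  - intros x Hx. apply is_RInt_ext with (fun t => d * ddphi t).
    { intros t Ht. rewrite Rmin_left, Rmax_right in Ht by lra.
      rewrite Hs by lra. unfold dphi, ddphi, twist, k. simpl. field. lra. }
    replace (d * (dphi x - dphi y1)) with (minus (d * dphi x) (d * dphi y1))
      by (unfold minus, plus, opp; simpl; ring).
    apply (is_RInt_derive (fun t => d * dphi t)).
    + intros t _. apply is_derive_scal. unfold dphi, ddphi, twist.
      auto_derive; [repeat split; eexists; eauto|].
      rewrite (Derive_eta_unique _ _ _ (Dp t)), (Derive_eta_unique _ _ _ (Ddp t)). ring.
    + intros t _. apply continuous_Rmult; [apply continuous_const|].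
      apply (ex_derive_continuous (V := R_NormedModule)). unfold ddphi, twist.
      auto_derive. repeat split; eexists; eauto.
Qed.

Definition psiL (k w t : R) : R := w * cos (w * t) + k * sin (w * t).
Definition dpsiL (k w t : R) : R := w * (- w * sin (w * t) + k * cos (w * t)).

(** [psiR L k m t = m cosh (m (L - t)) + k sinh (m (L - t))]. *)
Definition psiR (L k m t : R) : R :=
  (m + k) / 2 * exp (m * (L - t)) + (m - k) / 2 * exp (- (m * (L - t))).
Definition dpsiR (L k m t : R) : R :=
  - m * (m + k) / 2 * exp (m * (L - t)) + m * (m - k) / 2 * exp (- (m * (L - t))).

Lemma is_derive_psiL k w x : is_derive (psiL k w) x (dpsiL k w x).
Proof. unfold psiL, dpsiL. auto_derive; [easy|ring]. Qed.

Lemma is_derive_dpsiL k w x : is_derive (dpsiL k w) x (- (w * w) * psiL k w x).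
Proof. unfold psiL, dpsiL. auto_derive; [easy|ring]. Qed.

Lemma is_derive_psiR L k m x : is_derive (psiR L k m) x (dpsiR L k m x).
Proof. unfold psiR, dpsiR. auto_derive; [easy|]. unfold Rminus. field. Qed.

Lemma is_derive_dpsiR L k m x : is_derive (dpsiR L k m) x (m * m * psiR L k m x).
Proof. unfold psiR, dpsiR. auto_derive; [easy|]. unfold Rminus. field. Qed.

Lemma psiR_pos L k m t : 0 <= k -> 0 < m -> t <= L -> 0 < psiR L k m t.
Proof.
  intros Hk Hm Ht. unfold psiR.
  assert (exp (- (m * (L - t))) <= exp (m * (L - t))).
  { destruct (Rle_lt_or_eq_dec (- (m * (L - t))) (m * (L - t))) as [H|H]; [nra| |].
    - now left; apply exp_increasing.
    - now rewrite H. }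
  pose proof (exp_pos (- (m * (L - t)))). nra.
Qed.

Lemma chi_le x1 L t : t <= x1 -> chi x1 L t = 0.
Proof. intros Ht. unfold chi. destruct (Rlt_le_dec x1 t); lra. Qed.

Lemma chi_in x1 L t : x1 < t <= L -> chi x1 L t = 1.
Proof. intros Ht. unfold chi. destruct (Rlt_le_dec x1 t), (Rle_dec t L); lra. Qed.

Lemma is_principal_eig_D_of_node d a r x1 w :
  0 < d -> 0 < x1 -> psiL (a / (2 * d)) w x1 = 0 ->
  (forall t, 0 < t < x1 -> 0 < psiL (a / (2 * d)) w t) ->
  is_principal_eig_D d a r 0 x1 (r - a * a / (4 * d) - d * w * w).
Proof.
  intros Hd Hx1 Hzero Hpos. set (k := a / (2 * d)) in *.
  exists (twist k (psiL k w)), (twist k (fun t => k * psiL k w t + dpsiL k w t)).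
  split; [|split; [|split]].
  - apply (solves_eig_twist _ _ _ _ _ _ (- (w * w))); [exact Hd|..].
    + apply is_derive_psiL.
    + apply is_derive_dpsiL.
    + intros t _. field. lra.
  - intros x Hx. apply Rmult_lt_0_compat; [apply exp_pos|now apply Hpos].
  - unfold twist, psiL, dpsiL, k. rewrite !Rmult_0_r, sin_0, cos_0, exp_0. field. lra.
  - unfold twist. rewrite Hzero. ring.
Qed.

Definition junction_wronskian (L x1 k w m : R) : R :=
  dpsiL k w x1 * psiR L k m x1 - psiL k w x1 * dpsiR L k m x1.

Lemma is_principal_eig_of_junction d a r x1 L xi w m :
  0 < d -> 0 <= a -> 0 < x1 -> x1 < L -> 0 < m -> xi = d * (w * w + m * m) ->
  junction_wronskian L x1 (a / (2 * d)) w m = 0 ->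
  (forall t, 0 <= t <= x1 -> 0 < psiL (a / (2 * d)) w t) ->
  is_principal_eig d a (fun x => r - xi * chi x1 L x) 0 L (r - a * a / (4 * d) - d * w * w).
Proof.
  intros Hd Ha Hx1 HL Hm Hxi HW Hpos. set (k := a / (2 * d)) in *.
  assert (Hk : 0 <= k) by (unfold k; apply Rdiv_le_0_compat; lra).
  assert (HR : 0 < psiR L k m x1) by (apply psiR_pos; lra).
  set (C := psiL k w x1 / psiR L k m x1).
  assert (HC : 0 < C) by (apply Rdiv_lt_0_compat; [apply Hpos; lra|exact HR]).
  assert (E0 : psiL k w x1 = C * psiR L k m x1) by (unfold C; field; lra).
  assert (E1 : dpsiL k w x1 = C * dpsiR L k m x1).
  { unfold junction_wronskian in HW. unfold C.
    apply Rmult_eq_reg_r with (psiR L k m x1); [|lra]. field_simplify; lra. }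
  exists (glue x1 (twist k (psiL k w)) (twist k (fun t => C * psiR L k m t))),
    (glue x1 (twist k (fun t => k * psiL k w t + dpsiL k w t))
             (twist k (fun t => k * (C * psiR L k m t) + C * dpsiR L k m t))).
  split; [|split; [|split]].
  - apply solves_eig_glue; [lra|unfold twist; now rewrite E0|unfold twist; now rewrite E0, E1|..].
    + apply (solves_eig_twist _ _ _ _ _ _ (- (w * w))); [exact Hd|..].
      * apply is_derive_psiL.
      * apply is_derive_dpsiL.
      * intros t Ht. rewrite chi_le by lra. field. lra.
    + apply (solves_eig_twist _ _ _ _ _ _ (m * m)); [exact Hd|..].
      * intros x. now apply is_derive_scal, is_derive_psiR.
      * intros x. rewrite Rmult_comm, Rmult_assoc, (Rmult_comm (psiR L k m x)).
        now apply is_derive_scal, is_derive_dpsiR.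
      * intros t Ht. rewrite chi_in by lra. rewrite Hxi. field. lra.
  - intros x Hx. unfold glue, twist. destruct Rle_dec.
    + apply Rmult_lt_0_compat; [apply exp_pos|apply Hpos; lra].
    + apply Rmult_lt_0_compat; [apply exp_pos|apply Rmult_lt_0_compat; [exact HC|apply psiR_pos; lra]].
  - rewrite !glue_le by lra.
    unfold twist, psiL, dpsiL, k. rewrite !Rmult_0_r, sin_0, cos_0, exp_0. field. lra.
  - rewrite glue_gt by lra. unfold twist, psiR, dpsiR. rewrite Rminus_diag, Rmult_0_r, Ropp_0, exp_0.
    field.
Qed.

Lemma sqrt_1_plus_Rsqr_pos x : 0 < sqrt (1 + x²).
Proof. apply sqrt_lt_R0. pose proof (Rle_0_sqr x). lra. Qed.

Lemma psiL_polar k w t : 0 < w ->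
  psiL k w t = w * sqrt (1 + (k / w)²) * cos (w * t - atan (k / w)).
Proof.
  intros Hw. pose proof (sqrt_1_plus_Rsqr_pos (k / w)).
  rewrite cos_minus, cos_atan, sin_atan. unfold psiL. field. lra.
Qed.

Lemma dpsiL_polar k w t : 0 < w ->
  dpsiL k w t = - w * (w * sqrt (1 + (k / w)²)) * sin (w * t - atan (k / w)).
Proof.
  intros Hw. pose proof (sqrt_1_plus_Rsqr_pos (k / w)).
  rewrite sin_minus, cos_atan, sin_atan. unfold dpsiL. field. lra.
Qed.

Lemma psiL_pos k w t : 0 < w -> 0 <= t -> w * t - atan (k / w) < PI / 2 ->
  0 < psiL k w t.
Proof.
  intros Hw Ht Hph. rewrite psiL_polar by exact Hw.
  pose proof (sqrt_1_plus_Rsqr_pos (k / w)).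
  pose proof (atan_bound (k / w)). assert (0 <= w * t) by nra.
  apply Rmult_lt_0_compat; [nra|apply cos_gt_0; lra].
Qed.

Lemma phase_lt k x1 w w' : 0 <= k -> 0 < x1 -> 0 < w -> w < w' ->
  w * x1 - atan (k / w) < w' * x1 - atan (k / w').
Proof.
  intros Hk Hx Hw Hw'.
  assert (atan (k / w') <= atan (k / w)).
  { assert (Hkw : k / w' <= k / w).
    { unfold Rdiv. apply Rmult_le_compat_l; [exact Hk|]. left. apply Rinv_lt_contravar; nra. }
    destruct Hkw as [Hkw|Hkw]; [left; now apply atan_increasing|rewrite Hkw; lra]. }
  nra.
Qed.

(** By [psiL_polar], this [w] makes [x1] the first zero of [psiL k w] on [[0, +oo)]. *)
Lemma dirichlet_frequency k x1 : 0 <= k -> 0 < x1 ->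
  exists w, 0 < w /\ w * x1 - atan (k / w) = PI / 2.
Proof.
  intros Hk Hx. pose proof PI_RGT_0.
  assert (Hlo : 0 < PI / (4 * x1)) by (apply Rdiv_lt_0_compat; lra).
  destruct (Ranalysis5.IVT_interv (fun w => w * x1 - atan (k / w) - PI / 2) (PI / (4 * x1)) (PI / x1))
    as [w [Hw Ew]].
  - intros w Hw. apply ex_derive_continuity_pt. auto_derive. lra.
  - apply Rmult_lt_compat_l; [lra|]. apply Rinv_lt_contravar; nra.
  - replace (PI / (4 * x1) * x1) with (PI / 4) by (field; lra).
    assert (0 <= atan (k / (PI / (4 * x1)))); [|lra].
    rewrite <- atan_0. destruct (Rdiv_le_0_compat k _ Hk Hlo) as [Hp|Hp];
      [left; now apply atan_increasing|rewrite <- Hp; lra].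
  - replace (PI / x1 * x1) with PI by (field; lra). pose proof (atan_bound (k / (PI / x1))). lra.
  - exists w. split; lra.
Qed.

Lemma dpsiR_le_half L k m t : 0 <= k -> 0 < m -> 1 < m * (L - t) ->
  dpsiR L k m t <= - (m / 2) * psiR L k m t.
Proof.
  intros Hk Hm Hmt. unfold psiR, dpsiR. rewrite exp_Ropp.
  set (E := exp (m * (L - t))).
  assert (HE : 0 < E) by apply exp_pos.
  assert (HEE : 3 <= E * E).
  { unfold E. rewrite <- exp_plus. pose proof (exp_ineq1_le (m * (L - t) + m * (L - t))). lra. }
  assert (HiE : E * / E = 1) by (field; lra).
  assert (0 < / E) by (apply Rinv_0_lt_compat; exact HE).
  assert (Hdom : 3 * (m - k) * / E <= (m + k) * E).
  { replace ((m + k) * E) with ((m + k) * (E * E) * / E) by (field; lra).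
    apply Rmult_le_compat_r; nra. }
  assert (m * (3 * (m - k) * / E) <= m * ((m + k) * E)) by (apply Rmult_le_compat_l; lra).
  nra.
Qed.

Lemma junction_wronskian_pos L x1 k w m : 0 <= k -> 0 < m -> 1 < m * (L - x1) ->
  0 < psiL k w x1 -> 2 * Rabs (dpsiL k w x1) < m * psiL k w x1 ->
  0 < junction_wronskian L x1 k w m.
Proof.
  intros Hk Hm HmL Hpos Hdom. unfold junction_wronskian.
  assert (HR : 0 < psiR L k m x1) by (apply psiR_pos; nra).
  pose proof (dpsiR_le_half L k m x1 Hk Hm HmL).
  pose proof (Rle_abs (- dpsiL k w x1)). rewrite Rabs_Ropp in *.
  assert (0 < psiR L k m x1 * (dpsiL k w x1 + m / 2 * psiL k w x1)) by (apply Rmult_lt_0_compat; lra).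
  nra.
Qed.

Lemma lambda1D_value d a r x1 w :
  0 < d -> 0 < x1 -> 0 < w -> w * x1 - atan (a / (2 * d) / w) = PI / 2 ->
  lambda1D d a r 0 x1 = r - a * a / (4 * d) - d * w * w.
Proof.
  intros Hd Hx1 Hw Hnode.
  apply lambda1D_eq; [exact Hd|exact Hx1|].
  apply is_principal_eig_D_of_node; [exact Hd|exact Hx1| |].
  - rewrite psiL_polar, Hnode, cos_PI2 by exact Hw. ring.
  - intros t Ht. apply psiL_pos; [exact Hw|lra|]. nra.
Qed.

(** For large [xi] every [m = sqrt (xi / d - w^2)], [w <= wD], is large, and
    [dpsiR <= - (m / 2) psiR] at [x1] makes the Wronskian positive at [wl]; it is negative
    at the node [wD]. *)
Lemma junction_wronskian_root d k x1 L wD wl :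
  0 < d -> 0 <= k -> 0 < x1 -> x1 < L -> 0 < wl < wD -> wD * x1 - atan (k / wD) = PI / 2 ->
  exists X, forall xi, X < xi -> exists w, wl <= w < wD /\ d * (w * w) < xi /\
    junction_wronskian L x1 k w (sqrt (xi / d - w * w)) = 0.
Proof.
  intros Hd Hk Hx1 HL Hwl Hnode.
  assert (Hl : 0 < psiL k wl x1).
  { apply psiL_pos; [lra|lra|]. rewrite <- Hnode. apply phase_lt; lra. }
  set (M := / (L - x1) + 2 * Rabs (dpsiL k wl x1) / psiL k wl x1 + 1).
  assert (HM : / (L - x1) + 2 * Rabs (dpsiL k wl x1) / psiL k wl x1 < M).
  { unfold M. lra. }
  assert (0 < / (L - x1)) by (apply Rinv_0_lt_compat; lra).
  assert (0 <= 2 * Rabs (dpsiL k wl x1) / psiL k wl x1).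
  { apply Rdiv_le_0_compat; [pose proof (Rabs_pos (dpsiL k wl x1)); lra|exact Hl]. }
  exists (d * (wD * wD + M * M)). intros xi Hxi.
  assert (Hgap : forall w, wl <= w <= wD -> M * M < xi / d - w * w).
  { intros w Hw. assert (wD * wD + M * M < xi / d); [|nra].
    apply Rmult_lt_reg_l with d; [exact Hd|]. replace (d * (xi / d)) with xi by (field; lra). lra. }
  assert (Hm : forall w, wl <= w <= wD -> M < sqrt (xi / d - w * w)).
  { intros w Hw. rewrite <- (sqrt_square M) by lra. apply sqrt_lt_1_alt. split; [nra|now apply Hgap]. }
  set (W := fun w => junction_wronskian L x1 k w (sqrt (xi / d - w * w))).
  assert (HWl : 0 < W wl).
  { pose proof (Hm wl ltac:(lra)). apply junction_wronskian_pos; [exact Hk|lra| |exact Hl|].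
    - replace 1 with (/ (L - x1) * (L - x1)) by (field; lra).
      apply Rmult_lt_compat_r; lra.
    - replace (2 * Rabs (dpsiL k wl x1))
        with (2 * Rabs (dpsiL k wl x1) / psiL k wl x1 * psiL k wl x1) by (field; lra).
      apply Rmult_lt_compat_r; lra. }
  assert (HWD : W wD < 0).
  { assert (HR : 0 < psiR L k (sqrt (xi / d - wD * wD)) x1).
    { apply psiR_pos; [exact Hk| |lra]. pose proof (Hm wD ltac:(lra)). lra. }
    pose proof (sqrt_1_plus_Rsqr_pos (k / wD)).
    unfold W, junction_wronskian.
    rewrite psiL_polar, dpsiL_polar, Hnode, cos_PI2, sin_PI2 by lra.
    assert (0 < wD * (wD * sqrt (1 + (k / wD)²))) by (apply Rmult_lt_0_compat; nra).
    nra. }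
  destruct (Ranalysis5.IVT_interv (fun w => - W w) wl wD) as [w [Hw Ew]]; [|lra|lra|lra|].
  - intros w Hw. apply ex_derive_continuity_pt. pose proof (Hgap w Hw).
    unfold W, junction_wronskian, psiL, dpsiL, psiR, dpsiR. auto_derive. nra.
  - assert (Hlt : w < wD).
    { destruct (Rle_lt_or_eq_dec w wD) as [Hw'|Hw']; [lra|exact Hw'|subst w; lra]. }
    exists w. pose proof (Hgap w Hw). unfold W in Ew.
    split; [lra|split; [|lra]].
    apply Rmult_lt_reg_r with (/ d); [now apply Rinv_0_lt_compat|].
    replace (d * (w * w) * / d) with (w * w) by (field; lra). fold (Rdiv xi d). nra.
Qed.

Lemma continuous_step_potential r xi x1 L t : 0 < t < L -> t <> x1 ->
  continuous (fun x => r - xi * chi x1 L x) t.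
Proof.
  intros Ht Htx. destruct (Rlt_dec t x1) as [Hlt|Hge].
  - apply continuous_ext_loc with (fun _ => r - xi * 0); [|apply continuous_const].
    apply locally_open_interval with (t - 1) x1; [lra|]. intros y Hy. now rewrite chi_le by lra.
  - apply continuous_ext_loc with (fun _ => r - xi * 1); [|apply continuous_const].
    apply locally_open_interval with x1 L; [lra|]. intros y Hy. now rewrite chi_in by lra.
Qed.

Lemma lambda1_near_dirichlet d a r x1 L wD wl :
  0 < d -> 0 <= a -> 0 < x1 -> x1 < L -> 0 < wl < wD ->
  wD * x1 - atan (a / (2 * d) / wD) = PI / 2 ->
  exists X, forall xi, X < xi -> exists w, wl <= w < wD /\
    lambda1 d a (fun x => r - xi * chi x1 L x) 0 L = r - a * a / (4 * d) - d * w * w.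
Proof.
  intros Hd Ha Hx1 HL Hwl Hnode.
  assert (Hk : 0 <= a / (2 * d)) by (apply Rdiv_le_0_compat; lra).
  destruct (junction_wronskian_root d (a / (2 * d)) x1 L wD wl) as [X HX]; try lra.
  exists X. intros xi Hxi. destruct (HX xi Hxi) as [w [Hw [Hgap HW]]].
  assert (Hm : 0 < xi / d - w * w).
  { assert (w * w < xi / d); [|lra]. apply Rmult_lt_reg_l with d; [exact Hd|].
    replace (d * (xi / d)) with xi by (field; lra). lra. }
  exists w. split; [exact Hw|].
  apply lambda1_eq with x1; [exact Hd|lra|lra| |].
  { intros t Ht Htx. now apply continuous_step_potential. }
  apply is_principal_eig_of_junction with (sqrt (xi / d - w * w)); try lra.
  - now apply sqrt_lt_R0.
  - rewrite sqrt_sqrt by lra. field. lra.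
  - intros t Ht. apply psiL_pos; [lra|lra|].
    rewrite <- Hnode. apply Rle_lt_trans with (w * x1 - atan (a / (2 * d) / w)); [nra|].
    apply phase_lt; lra.
Qed.

Theorem lemma3p5 (d a r x1 L : R) :
  0 < d -> 0 <= a -> 0 < r -> 0 < x1 -> x1 < L ->
  is_lim (fun xi => lambda1 d a (fun x => r - xi * chi x1 L x) 0 L)
         p_infty (Finite (lambda1D d a r 0 x1)).
Proof.
  intros Hd Ha _ Hx1 HL.
  destruct (dirichlet_frequency (a / (2 * d)) x1) as [wD [HwD Hnode]];
    [apply Rdiv_le_0_compat; lra|exact Hx1|].
  rewrite (lambda1D_value d a r x1 wD) by assumption.
  apply is_lim_spec. intros eps. pose proof (cond_pos eps) as Heps.
  set (del := Rmin (wD / 2) (eps / (4 * d * wD))).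
  assert (Hdel : 0 < del) by (apply Rmin_glb_lt; [lra|apply Rdiv_lt_0_compat; nra]).
  assert (Hdel1 : del <= wD / 2) by apply Rmin_l.
  assert (Hdel2 : del <= eps / (4 * d * wD)) by apply Rmin_r.
  destruct (lambda1_near_dirichlet d a r x1 L wD (wD - del)) as [X HX]; try lra.
  exists X. intros xi Hxi. destruct (HX xi Hxi) as [w [Hw ->]].
  replace (r - a * a / (4 * d) - d * w * w - (r - a * a / (4 * d) - d * wD * wD))
    with (d * ((wD - w) * (wD + w))) by ring.
  assert (Hb : (wD - w) * (wD + w) <= eps / (4 * d * wD) * (2 * wD)) by (apply Rmult_le_compat; lra).
  replace (eps / (4 * d * wD) * (2 * wD)) with (eps / (2 * d)) in Hb by (field; lra).
  rewrite Rabs_pos_eq by (apply Rmult_le_pos; [lra|apply Rmult_le_pos; lra]).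
  apply Rle_lt_trans with (d * (eps / (2 * d))); [now apply Rmult_le_compat_l; lra|].
  replace (d * (eps / (2 * d))) with (eps / 2) by (field; lra). lra.
Qed.
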